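(* Let $d\ge1$ and $c=(c_1,\dots,c_M)\in C(d,n,p)$. The image of the multiplication map $S_1\otimes T_{c,d}\to S_{d+1}$ equals $T_{c^1,d+1}$, where $c^1\in C(d+1,n,p)$ is $$c^1=(c_1,\dots,c_M,0)+(\underbrace{1,\dots,1}_{\lfloor d\rfloor'},0,\dots,0)-(\underbrace{1,\dots,1}_{c^\sharp},0,\dots,0),$$ all three vectors having length $M+1$ (carry patterns being compared after padding with zeros).
   Context: $\mathbf k$ algebraically closed of characteristic $p>0$, $S=\mathbf k[x_1,\dots,x_n]$, $S_e$ its degree-$e$ part. Base-$p$ expansion $a=\sum_{j\ge0}a_jp^j$, $0\le a_j\le p-1$; for $d\ge1$, $M=\max\{j:d_j\ne0\}$; and $\lfloor a\rfloor':=\min\{j: a_j\ne p-1\}$. The carry pattern of a degree-$d$ monomial $x_1^{b_1}\cdots x_n^{b_n}$ (with $b_{i,j}$ the base-$p$ digits of $b_i$) is $(c_1,\dots,c_M)$ determined by $\sum_i\sum_{j<\ell}b_{i,j}p^j=c_\ell p^\ell+\sum_{j<\ell}d_jp^j$ for $1\le\ell\le M$, with $c_i=0$ for $i<1$ or $i>M$. $C(d,n,p)$ is the set of carry patterns of degree-$d$ monomials, ordered componentwise (sequences of different length compared after appending zeros). For $c\in C(d,n,p)$, $T_{c,d}\subseteq S_d$ is the $\mathbf k$-span of the degree-$d$ monomials with carry pattern $\le c$. Also $c^\sharp:=\min\{0\le j\le M: d_j+pc_{j+1}-c_j<n(p-1)\}$ (using $c_0=c_{M+1}=0$). *)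

From HB Require Import structures.
From mathcomp Require Import all_boot all_order all_algebra.
From mathcomp Require Import finmap mpoly.
Set Implicit Arguments. Unset Strict Implicit. Unset Printing Implicit Defensive.
Import GRing.Theory.

Definition digit (p a j : nat) : nat := (a %/ p ^ j) %% p.

Definition topdeg (p d : nat) : nat :=
  \max_(j < d.+1 | digit p d j != 0) j.

(* floor'(a) = min{ j : a_j <> p-1 }  (searched in [0, a+1], which suffices for p >= 2) *)
Definition floorp (p a : nat) : nat :=
  find (fun j => digit p a j != p.-1) (iota 0 a.+2).

(* carry pattern of a monomial m of degree d = mdeg m, as a function
   nat -> nat, zero outside 1..M.  For 1 <= l <= M, c_l is defined by
   sum_i sum_{j<l} b_{i,j} p^j = c_l p^l + sum_{j<l} d_j p^j,
   and sum_{j<l} a_j p^j = a %% p^l. *)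
Definition carry (p n : nat) (m : 'X_{1..n}) (l : nat) : nat :=
  let d := mdeg m in
  if (1 <= l <= topdeg p d)%N then
    ((\sum_(i < n) (m i %% p ^ l)) - d %% p ^ l) %/ p ^ l
  else 0.

Definition is_carry_pattern (p n d : nat) (c : nat -> nat) : Prop :=
  exists m : 'X_{1..n}, mdeg m = d /\ forall l, c l = carry p m l.

(* componentwise order (sequences implicitly padded with zeros) *)
Definition carry_le (c c' : nat -> nat) : Prop := forall l, (c l <= c' l)%N.

(* T_{c,d}: the k-span of degree-d monomials with carry pattern <= c,
   i.e. polynomials all of whose monomials are of that kind. *)
Definition inT (k : fieldType) (p n : nat) (c : nat -> nat) (d : nat)
  (f : {mpoly k[n]}) : Prop :=
  forall m, m \in msupp f -> mdeg m = d /\ carry_le (carry p m) c.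

Definition inS1 (k : fieldType) (n : nat) (f : {mpoly k[n]}) : Prop :=
  forall m, m \in msupp f -> mdeg m = 1%N.

(* image of the multiplication map S_1 (x) T_{c,d} -> S_{d+1}:
   finite sums of products l * t with l in S_1 and t in T_{c,d} *)
Definition in_mul_image (k : fieldType) (p n : nat) (c : nat -> nat) (d : nat)
  (f : {mpoly k[n]}) : Prop :=
  exists s : seq ({mpoly k[n]} * {mpoly k[n]}),
    (forall x, x \in s -> @inS1 k n x.1 /\ @inT k p n c d x.2) /\
    f = (\sum_(x <- s) x.1 * x.2)%R.

(* c^sharp = min{0 <= j <= M : d_j + p c_{j+1} - c_j < n(p-1)}, c_0 = c_{M+1} = 0
   (returns M+1 if no such j) ; the inequality is rewritten without subtraction *)
Definition csharp (p n d : nat) (c : nat -> nat) : nat :=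
  let M := topdeg p d in
  let c' := fun i => if (1 <= i <= M)%N then c i else 0 in
  find (fun j => digit p d j + p * c' j.+1 < n * p.-1 + c' j)%N (iota 0 M.+1).

Definition c_one (p n d : nat) (c : nat -> nat) (l : nat) : nat :=
  let M := topdeg p d in
  let c' := if (1 <= l <= M)%N then c l else 0 in
  (c' + (1 <= l <= floorp p d)%N) - (1 <= l <= csharp p n d c)%N.

From HB Require Import structures.
From mathcomp Require Import all_boot all_order all_algebra.
From mathcomp Require Import finmap mpoly.
From mathcomp Require Import zify.
Set Implicit Arguments. Unset Strict Implicit. Unset Printing Implicit Defensive.
Import GRing.Theory.

(* Raising the exponent b_i of a degree-d monomial by one changes its l-th
   carry by [l <= floor'(d)] - [l <= floor'(b_i)].  Let b realise c.  The
   columns j < c^sharp of b consist of digits p-1 only, so floor'(b_i) >= c^sharp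
   for every i, with equality for some i0, and b x_i0 realises c^1.  If m <= c
   has degree d and t = floor'(m_i), comparing the column sums of m with the
   full columns of b shows that the carries of m lie strictly below those of c
   on (t, c^sharp]; this is exactly what m x_i <= c^1 requires.  Conversely, a
   monomial m' <= c^1 of degree d+1 is m x_i with m <= c, for the i minimising
   floor'(m'_i - 1) over m'_i > 0: at the levels l below that minimum every
   m'_j is divisible by p^l, so the l-th carry of m' vanishes. *)

Lemma dvdn_succE (a d : nat) : 0 < d -> (d %| a.+1) = (a %% d == d.-1).
Proof.
move=> d_gt0; rewrite {1}(divn_eq a d) -addnS dvdn_addr ?dvdn_mull //.
apply/idP/eqP => [dv | ->]; last by rewrite prednK.
apply/eqP; rewrite -eqSS prednK // eqn_leq ltn_mod d_gt0.
exact: dvdn_leq dv.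
Qed.

Section Digits.

Variable p : nat.
Hypothesis p_gt1 : 1 < p.
Let p_gt0 : 0 < p := ltnW p_gt1.
Let pX_gt0 (l : nat) : 0 < p ^ l. Proof. by rewrite expn_gt0 p_gt0. Qed.

Lemma digit_leq (a j : nat) : digit p a j <= p.-1.
Proof. by rewrite -ltnS prednK // ltn_mod. Qed.

Lemma modn_expS_digit (a j : nat) :
  a %% p ^ j.+1 = a %% p ^ j + p ^ j * digit p a j.
Proof.
rewrite /digit modn_divl -expnS {1}(divn_eq (a %% p ^ j.+1) (p ^ j)).
by rewrite modn_dvdm ?dvdn_exp2l // addnC mulnC.
Qed.

Lemma modn_exp_predP (a l : nat) :
  reflect (forall j, j < l -> digit p a j = p.-1) (a %% p ^ l == (p ^ l).-1).
Proof.
elim: l => [|l IHl]; first by rewrite expn0 modn1; left.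
have X_gt0 := pX_gt0 l.
have r_lt : a %% p ^ l < p ^ l by rewrite ltn_mod.
have s_le := digit_leq a l.
rewrite modn_expS_digit expnSr.
have -> : (a %% p ^ l + p ^ l * digit p a l == (p ^ l * p).-1) =
          (a %% p ^ l == (p ^ l).-1) && (digit p a l == p.-1).
  move: (a %% p ^ l) (digit p a l) r_lt s_le => r s r_lt s_le.
  apply/idP/idP => [/eqP eq_rs | /andP [/eqP-> /eqP->]]; last by apply/eqP; nia.
  by apply/andP; split; apply/eqP; nia.
apply: (iffP andP) => [[/IHl full /eqP top] j | full].
  by rewrite ltnS leq_eqVlt => /predU1P [-> | /full].
by split; [apply/IHl => j lt_jl; apply: full; apply: ltnW | rewrite full].
Qed.

Lemma leq_floorpP (a l : nat) :
  reflect (forall j, j < l -> digit p a j = p.-1) (l <= floorp p a).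
Proof.
have has_nonfull : has (fun j => digit p a j != p.-1) (iota 0 a.+2).
  apply/hasP; exists a.+1; first by rewrite mem_iota ltnSn.
  rewrite /digit divn_small ?mod0n; first lia.
  exact: ltn_trans (ltnSn a) (ltn_expl _ p_gt1).
have find_lt : floorp p a < a.+2 by rewrite -(size_iota 0 a.+2) -has_find.
apply: (iffP idP) => [le_l j lt_jl | full].
  have lt_jf := leq_trans lt_jl le_l.
  have := before_find 0 lt_jf.
  by rewrite nth_iota ?add0n ?(ltn_trans lt_jf) // => /negbFE/eqP.
rewrite leqNgt; apply/negP => lt_fl.
have := nth_find 0 has_nonfull.
by rewrite nth_iota // add0n full ?eqxx.
Qed.

Lemma floorpE (a l : nat) : (l <= floorp p a) = (a %% p ^ l == (p ^ l).-1).
Proof. exact/leq_floorpP/modn_exp_predP. Qed.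

Lemma digit_floorp (a : nat) : digit p a (floorp p a) != p.-1.
Proof.
apply/eqP => full; suff : (floorp p a).+1 <= floorp p a by rewrite ltnn.
apply/leq_floorpP => j; rewrite ltnS leq_eqVlt.
by case/predU1P => [-> // | ]; apply/leq_floorpP.
Qed.

Lemma dvdn_exp_succ (a l : nat) : (p ^ l %| a.+1) = (l <= floorp p a).
Proof. by rewrite floorpE dvdn_succE. Qed.

Lemma modn_succ_floorp (a l : nat) :
  a.+1 %% p ^ l + (l <= floorp p a) * p ^ l = a %% p ^ l + 1.
Proof.
rewrite modnS -dvdn_exp_succ; case: ifP => [dv | _]; last by rewrite addn0 addn1.
by move: dv; rewrite dvdn_succE // => /eqP->; rewrite addn1 prednK // mul1n.
Qed.

Lemma digit_gt_topdeg (d j : nat) : topdeg p d < j -> digit p d j = 0.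
Proof.
move=> lt_Mj; case: (leqP j d) => [le_jd | lt_dj].
  apply/eqP; apply: contraTT lt_Mj => nz; rewrite -leqNgt.
  by rewrite /topdeg (bigmax_sup (Ordinal (le_jd : j < d.+1))).
rewrite /digit divn_small ?mod0n //.
exact: ltn_trans lt_dj (ltn_expl _ p_gt1).
Qed.

Lemma ltn_exp_topdeg (d : nat) : d < p ^ (topdeg p d).+1.
Proof.
set M := topdeg p d.
have stable N : d %% p ^ (M.+1 + N) = d %% p ^ M.+1.
  elim: N => [|N IHN]; first by rewrite addn0.
  by rewrite addnS modn_expS_digit digit_gt_topdeg ?muln0 ?addn0 // ltnS leq_addr.
have big : d < p ^ (M.+1 + d).
  exact: leq_trans (ltn_expl d p_gt1) (leq_pexp2l p_gt0 (leq_addl _ _)).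
by rewrite -[X in X < _](modn_small big) stable ltn_mod.
Qed.

End Digits.

Lemma mdeg_gt0P (n : nat) (m : 'X_{1..n}) : 0 < mdeg m -> exists i, 0 < m i.
Proof.
by rewrite lt0n mdegE sum_nat_eq0 negb_forall => /existsP [i]; rewrite -lt0n; exists i.
Qed.

Section Carries.

Variables p n : nat.
Hypothesis p_gt1 : 1 < p.
Let p_gt0 : 0 < p := ltnW p_gt1.
Let pX_gt0 (l : nat) : 0 < p ^ l. Proof. by rewrite expn_gt0 p_gt0. Qed.
Implicit Types (m : 'X_{1..n}) (i : 'I_n).

Lemma mnm_leq_mdeg m i : m i <= mdeg m.
Proof. by rewrite mdegE (bigD1 i) //= leq_addr. Qed.

Lemma carry_modn_sum m l :
  carry p m l * p ^ l + mdeg m %% p ^ l = \sum_(i < n) (m i %% p ^ l).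
Proof.
rewrite /carry /=; set S := \sum_(i < n) _; set X := p ^ l.
have S_mod : S %% X = mdeg m %% X by rewrite modn_summ mdegE.
case: ifP => [_ | /negbT out_l].
  have -> : S - mdeg m %% X = S %/ X * X by rewrite -S_mod {1}(divn_eq S X) addnK.
  by rewrite mulnK ?pX_gt0 // -S_mod -divn_eq.
rewrite mul0n add0n; have [l0 | l_gt0] := posnP l.
  by rewrite /X /S l0 expn0 modn1 big1 // => i _; rewrite modn1.
have deg_lt : mdeg m < X.
  apply: leq_trans (ltn_exp_topdeg p_gt1 _) _.
  by rewrite leq_pexp2l //; move: out_l; rewrite l_gt0 /=; lia.
rewrite /S modn_small // mdegE; apply: eq_bigr => i _.
by rewrite modn_small // (leq_ltn_trans (mnm_leq_mdeg m i)).
Qed.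

Lemma carry_addU m i l :
  carry p (m + U_(i))%MM l + (l <= floorp p (m i)) =
  carry p m l + (l <= floorp p (mdeg m)).
Proof.
apply/eqP; rewrite -(eqn_pmul2r (pX_gt0 l)) !mulnDl; apply/eqP.
have R1 := carry_modn_sum (m + U_(i))%MM l.
have R0 := carry_modn_sum m l.
rewrite mdegD mdeg1 addn1 (bigD1 i) //= mnmDE mnm1E eqxx addn1 in R1.
rewrite (bigD1 i) //= in R0.
rewrite (eq_bigr (fun j => m j %% p ^ l)) in R1; last first.
  by move=> j /negbTE ji; rewrite mnmDE mnm1E eq_sym ji addn0.
have F1 := modn_succ_floorp p_gt1 (m i) l.
have F2 := modn_succ_floorp p_gt1 (mdeg m) l.
lia.
Qed.

Lemma carry_column m j :
  p * carry p m j.+1 + digit p (mdeg m) j =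
  carry p m j + \sum_(i < n) digit p (m i) j.
Proof.
apply/eqP; rewrite -(eqn_pmul2l (pX_gt0 j)) !mulnDr; apply/eqP.
have R1 := carry_modn_sum m j.+1.
have R0 := carry_modn_sum m j.
rewrite (eq_bigr _ (fun i _ => modn_expS_digit p (m i) j)) big_split /= in R1.
rewrite -big_distrr /= modn_expS_digit expnSr -R0 in R1; move: R1.
move: (carry p m j.+1) (carry p m j) (digit p (mdeg m) j) (\sum_(i < n) _).
move: (p ^ j) (mdeg m %% p ^ j) => X r C1 C0 D S; nia.
Qed.

Lemma column_sum_leq m j : \sum_(i < n) digit p (m i) j <= n * p.-1.
Proof.
rewrite -[n in n * _]card_ord -sum_nat_const.
by apply: leq_sum => i _; apply: digit_leq.
Qed.

Lemma column_sum_fullE m j :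
  (\sum_(i < n) digit p (m i) j == n * p.-1) = [forall i, digit p (m i) j == p.-1].
Proof.
have [_ <-] := leqif_sum (fun i (_ : true) => leqif_eq (digit_leq p_gt1 (m i) j)).
by rewrite sum_nat_const card_ord.
Qed.

Lemma carry_eq0_dvdn m l :
  (forall i, p ^ l %| m i) -> carry p m l = 0 /\ p ^ l %| mdeg m.
Proof.
move=> dvd_m; have := carry_modn_sum m l.
rewrite big1 => [|i _]; last exact/eqP/dvd_m.
move/eqP; rewrite addn_eq0 muln_eq0 (negbTE (lt0n_neq0 (pX_gt0 l))) orbF.
by case/andP => /eqP.
Qed.

Lemma carry_le_split (d : nat) (c c' : nat -> nat) m' :
  (forall l, c' l <= c l + (l <= floorp p d)) ->
  mdeg m' = d.+1 -> carry_le (carry p m') c' ->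
  exists i m, [/\ m' = (m + U_(i))%MM, mdeg m = d & carry_le (carry p m) c].
Proof.
move=> le_c' deg_m' le_m'.
have [i0 m'_i0] : exists i0, 0 < m' i0 by apply: mdeg_gt0P; rewrite deg_m'.
case: (@arg_minnP _ i0 (fun j => 0 < m' j) (fun j => floorp p (m' j).-1) m'_i0).
move=> i m'_i min_i; set m := (m' - U_(i))%MM.
have m'E : m' = (m + U_(i))%MM by rewrite submK // lep1mP -lt0n.
have m_i : m i = (m' i).-1 by rewrite mnmBE mnm1E eqxx subn1.
have deg_m : mdeg m = d by move: deg_m'; rewrite m'E mdegD mdeg1 addn1 => -[].
exists i, m; split=> // l.
have := carry_addU m i l; rewrite -m'E deg_m m_i.
have := le_m' l; have := le_c' l.
case: (leqP l (floorp p (m' i).-1)) => [le_lv | _]; last by lia.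
have dvd_m' j : p ^ l %| m' j.
  have [-> | m'_j] := posnP (m' j); first exact: dvdn0.
  by rewrite -(prednK m'_j) dvdn_exp_succ // (leq_trans le_lv) ?min_i.
have [-> dvd_d] := carry_eq0_dvdn dvd_m'.
by move: dvd_d; rewrite deg_m' dvdn_exp_succ // => ->; lia.
Qed.

End Carries.

Section CarryPattern.

Variables (p n d : nat) (b : 'X_{1..n}) (c : nat -> nat).
Hypotheses (p_gt1 : 1 < p) (mdeg_b : mdeg b = d) (carry_b : forall l, c l = carry p b l).
Implicit Types (m : 'X_{1..n}) (i : 'I_n).

Lemma carry_pattern_support l : (if 1 <= l <= topdeg p d then c l else 0) = c l.
Proof. by rewrite carry_b /carry /= mdeg_b; case: ifP => // ->. Qed.

Lemma csharpE :
  csharp p n d c =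
  find (fun j => \sum_(i < n) digit p (b i) j < n * p.-1) (iota 0 (topdeg p d).+1).
Proof.
rewrite /csharp; apply: eq_find => j /=; rewrite !carry_pattern_support.
have := carry_column p_gt1 b j; rewrite mdeg_b -!carry_b.
by move: (digit p d j) (\sum_(i < n) _) => D S col; apply/idP/idP; lia.
Qed.

Lemma digit_below_csharp i j : j < csharp p n d c -> digit p (b i) j = p.-1.
Proof.
rewrite csharpE => lt_j.
have lt_jM : j < (topdeg p d).+1.
  by rewrite (leq_trans lt_j) // -[X in _ <= X](size_iota 0) find_size.
have := before_find 0 lt_j; rewrite nth_iota // add0n => /negbT; rewrite -leqNgt => full_j.
have : \sum_(i < n) digit p (b i) j == n * p.-1.
  by rewrite eqn_leq full_j column_sum_leq.
by rewrite column_sum_fullE // => /forallP /(_ i) /eqP.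
Qed.

Lemma csharp_leq_floorp i : csharp p n d c <= floorp p (b i).
Proof. by apply/leq_floorpP => // j; apply: digit_below_csharp. Qed.

Lemma exists_floorp_eq_csharp : 0 < d -> exists i0, floorp p (b i0) = csharp p n d c.
Proof.
move=> d_gt0.
suff [i0 nonfull] : exists i0, digit p (b i0) (csharp p n d c) != p.-1.
  exists i0; apply/eqP; rewrite eqn_leq csharp_leq_floorp andbT leqNgt.
  by apply: contra nonfull => /(leq_floorpP p_gt1) -> //.
have [cs_lt | cs_ge] := ltnP (csharp p n d c) (topdeg p d).+1.
  have has_nonfull : has (fun j => \sum_(i < n) digit p (b i) j < n * p.-1)
                         (iota 0 (topdeg p d).+1).
    by rewrite has_find size_iota -csharpE.
  have := nth_find 0 has_nonfull; rewrite -csharpE nth_iota // add0n.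
  rewrite ltn_neqAle column_sum_leq // andbT column_sum_fullE // negb_forall.
  by case/existsP=> i0; exists i0.
have [i0 _] : exists i0, 0 < b i0 by apply: mdeg_gt0P; rewrite mdeg_b.
exists i0; rewrite /digit divn_small ?mod0n; first lia.
apply: leq_ltn_trans (mnm_leq_mdeg b i0) _; rewrite mdeg_b.
exact: leq_trans (ltn_exp_topdeg p_gt1 d) (leq_pexp2l (ltnW p_gt1) cs_ge).
Qed.

Lemma carry_lt_below_csharp m i : mdeg m = d -> carry_le (carry p m) c ->
  forall l, floorp p (m i) < l <= csharp p n d c -> carry p m l < c l.
Proof.
move=> deg_m le_m; elim=> [// | j IHj] /andP [le_tj lt_jcs].
have col_b := carry_column p_gt1 b j; have col_m := carry_column p_gt1 m j.
have full_b : \sum_(k < n) digit p (b k) j = n * p.-1.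
  by apply/eqP; rewrite column_sum_fullE //; apply/forallP => k; rewrite digit_below_csharp.
rewrite mdeg_b -!carry_b full_b in col_b; rewrite deg_m in col_m.
have sum_m := column_sum_leq p_gt1 m j.
have strict : carry p m j < c j \/ \sum_(k < n) digit p (m k) j < n * p.-1.
  move: le_tj; rewrite ltnS leq_eqVlt => /predU1P [t_j | lt_tj].
    right; rewrite ltn_neqAle sum_m andbT column_sum_fullE // negb_forall.
    by apply/existsP; exists i; rewrite -t_j digit_floorp.
  by left; apply: IHj; rewrite lt_tj ltnW.
rewrite -(ltn_pmul2l (ltnW p_gt1)); have := le_m j.+1; have := le_m j.
move: col_b col_m sum_m strict (digit p d j) (\sum_(k < n) digit p (m k) j).
by move: (p * _) (p * _) => *; lia.
Qed.

Section Witness.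

Variable i0 : 'I_n.
Hypothesis floorp_i0 : floorp p (b i0) = csharp p n d c.

Lemma c_oneE l : c_one p n d c l = carry p (b + U_(i0))%MM l.
Proof.
have := carry_addU p_gt1 b i0 l; rewrite floorp_i0 mdeg_b -carry_b.
case: (posnP l) => [-> // | l_gt0].
by rewrite /c_one /= carry_pattern_support l_gt0 /=; lia.
Qed.

Lemma c_one_add_csharp l :
  c_one p n d c l + (l <= csharp p n d c) = c l + (l <= floorp p d).
Proof.
by rewrite c_oneE -floorp_i0 -mdeg_b carry_b carry_addU.
Qed.

Lemma carry_addU_le_c_one m i : mdeg m = d -> carry_le (carry p m) c ->
  carry_le (carry p (m + U_(i))%MM) (c_one p n d c).
Proof.
move=> deg_m le_m l.
have := carry_addU p_gt1 m i l; have := c_one_add_csharp l.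
have := le_m l; have := @carry_lt_below_csharp m i deg_m le_m l.
rewrite deg_m; lia.
Qed.

End Witness.

End CarryPattern.

Section MultiplicationImage.

Variables (k : fieldType) (p n d : nat) (c c' : nat -> nat).
Implicit Types (f g : {mpoly k[n]}).

Lemma in_mul_image0 : in_mul_image p c d (0 : {mpoly k[n]})%R.
Proof. by exists [::]; rewrite big_nil. Qed.

Lemma in_mul_imageD f g :
  in_mul_image p c d f -> in_mul_image p c d g -> in_mul_image p c d (f + g)%R.
Proof.
move=> [s [s_ok ->]] [t [t_ok ->]]; exists (s ++ t); rewrite big_cat; split=> //.
by move=> x; rewrite mem_cat => /orP [/s_ok | /t_ok].
Qed.

Lemma in_mul_image_inT f :
  (forall m (i : 'I_n), mdeg m = d -> carry_le (carry p m) c ->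
     carry_le (carry p (m + U_(i))%MM) c') ->
  in_mul_image p c d f -> inT p c' d.+1 f.
Proof.
move=> mulU_le [s [s_ok ->]] m /msupp_sum_le /flatten_mapP [x].
rewrite mem_filter => /andP [_ /s_ok [x1_lin x2_T]].
case/msuppM_le/allpairsP => [[m1 m2] [/= /x1_lin deg_m1 /x2_T [deg_m2 le_m2] ->]].
have /mdeg1P [i /eqP ->] : mdeg m1 == 1 by rewrite deg_m1.
by rewrite addmC mdegD mdeg1 deg_m2 addn1; split; last exact: mulU_le.
Qed.

Lemma inT_in_mul_image f :
  (forall m', mdeg m' = d.+1 -> carry_le (carry p m') c' ->
     exists (i : 'I_n) m, [/\ m' = (m + U_(i))%MM, mdeg m = d & carry_le (carry p m) c]) ->
  inT p c' d.+1 f -> in_mul_image p c d f.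
Proof.
move=> split_le f_T; rewrite (mpolyE f) big_seq.
apply: (big_ind (in_mul_image p c d)); [exact: in_mul_image0 | exact: in_mul_imageD |].
move=> m /f_T [deg_m le_m]; have [i [m2 [-> deg_m2 le_m2]]] := split_le m deg_m le_m.
exists [:: ('X_[U_(i)], (f@_(m2 + U_(i)) *: 'X_[m2])%R)]; split.
  move=> x; rewrite mem_seq1 => /eqP -> /=; split.
    by move=> m1; rewrite msuppX mem_seq1 => /eqP ->; rewrite mdeg1.
  by move=> m1 /msuppZ_le; rewrite msuppX mem_seq1 => /eqP ->.
by rewrite big_cons big_nil addr0 /= mpolyXD -scalerAr mulrC.
Qed.

End MultiplicationImage.

Unset Implicit Arguments.

Theorem mainTheorem6 (k : closedFieldType) (p n d : nat) (c : nat -> nat) :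
  prime p -> p \in [pchar k]%R -> (1 <= d)%N ->
  is_carry_pattern p n d c ->
  is_carry_pattern p n d.+1 (c_one p n d c) /\
  forall f : {mpoly k[n]},
    in_mul_image p c d f <-> inT p (c_one p n d c) d.+1 f.
Proof.
move=> /prime_gt1 p_gt1 _ d_gt0 [b [mdeg_b carry_b]].
have [i0 floorp_i0] := exists_floorp_eq_csharp p_gt1 mdeg_b carry_b d_gt0.
split.
  exists (b + U_(i0))%MM; split; first by rewrite mdegD mdeg1 mdeg_b addn1.
  exact: (c_oneE p_gt1 mdeg_b carry_b floorp_i0).
move=> f; split.
  apply: in_mul_image_inT => m i.
  exact: (carry_addU_le_c_one p_gt1 mdeg_b carry_b floorp_i0).
apply: inT_in_mul_image => m'; apply: carry_le_split => // l.
have := c_one_add_csharp p_gt1 mdeg_b carry_b floorp_i0 l; lia.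
Qed.
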